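(* Fix stress levels $x_1<x_2$, a stress-change time $\tau>0$, and inspection times $0=t_0<t_1<\cdots<t_L$ with $t_k=\tau$ for some $1\le k<L$. Let $\theta=(\gamma_0,\gamma_1,\gamma_2,a_1)\in\Theta=(0,\infty)^4$, and let $s=s(\theta)=u-\tau$, where $u$ is the unique positive root of $\frac{\gamma_2}{3}u^3+\frac{\gamma_1}{2}u^2+\gamma_0u-e^{a_1(x_1-x_2)}\left(\gamma_0\tau+\gamma_1\frac{\tau^2}{2}+\gamma_2\frac{\tau^3}{3}\right)=0$. Define $$R_\theta(t,x_1)=\exp\!\Big(-e^{a_1x_1}\big(\gamma_0t+\gamma_1\tfrac{t^2}{2}+\gamma_2\tfrac{t^3}{3}\big)\Big),\quad R_\theta(t,x_2)=\exp\!\Big(-e^{a_1x_2}\big(\gamma_0(t+s)+\gamma_1\tfrac{(t+s)^2}{2}+\gamma_2\tfrac{(t+s)^3}{3}\big)\Big),$$ and $R_\theta(t)=R_\theta(t,x_1)$ for $0\le t\le\tau$, $R_\theta(t)=R_\theta(t,x_2)$ for $t\ge\tau$. Let $\pi_j(\theta)=R_\theta(t_{j-1})-R_\theta(t_j)$ for $j=1,\dots,L$, $\pi_{L+1}(\theta)=R_\theta(t_L)$, $\pi(\theta)=(\pi_1(\theta),\dots,\pi_{L+1}(\theta))^T$. Given counts $(n_1,\dots,n_{L+1})$ with $N=\sum_jn_j$, $\widehat p=(n_1/N,\dots,n_{L+1}/N)^T$, and $\beta\ge0$, let $\widehat\theta_\beta$ be a minimizer over $\Theta$ of $d_\beta(\widehat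 p,\pi(\theta))$, where for $\beta>0$ $$d_\beta(\widehat p,\pi(\theta))=\sum_{j=1}^{L+1}\Big[\pi_j(\theta)^{\beta+1}-\big(1+\tfrac1\beta\big)\pi_j(\theta)^\beta\widehat p_j+\tfrac1\beta\widehat p_j^{\beta+1}\Big]$$ and for $\beta=0$, $d_0(\widehat p,\pi(\theta))=\sum_j\widehat p_j\log(\widehat p_j/\pi_j(\theta))$. Then $\widehat\theta_\beta$ satisfies $U_\beta(\widehat\theta_\beta)=0\in\mathbb{R}^4$, where $$U_\beta(\theta)=W(\theta)^TD(\theta)^{\beta-1}\big(\widehat p-\pi(\theta)\big),$$ $D(\theta)=\mathrm{diag}(\pi_1(\theta),\dots,\pi_{L+1}(\theta))$, and $W(\theta)$ is the $(L+1)\times4$ Jacobian matrix of $\pi(\theta)$ whose $j$-th row is $w_j^T$ with $w_j=\frac{\partial R_\theta(t_{j-1},x_1)}{\partial\theta}-\frac{\partial R_\theta(t_j,x_1)}{\partial\theta}$ if $t_{j-1}<\tau$, $w_j=\frac{\partial R_\theta(t_{j-1},x_2)}{\partial\theta}-\frac{\partial R_\theta(t_j,x_2)}{\partial\theta}$ if $\tau\le t_{j-1}$ and $j\le L$, and $w_{L+1}=\frac{\partial R_\theta(t_L,x_2)}{\partial\theta}$. Here, with $k_1(t)=\gamma_2t^2+\gamma_1t+\gamma_0$ and $k_2(t)=\frac{\gamma_2}{3}t^2+\frac{\gamma_1}{2}t+\gamma_0$, $$\frac{\partial R_\theta(t,x_1)}{\partial\gamma_0}=-R_\theta(t,x_1)e^{a_1x_1}t,\quad\frac{\partial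 R_\theta(t,x_1)}{\partial\gamma_1}=-R_\theta(t,x_1)e^{a_1x_1}\frac{t^2}{2},\quad\frac{\partial R_\theta(t,x_1)}{\partial\gamma_2}=-R_\theta(t,x_1)e^{a_1x_1}\frac{t^3}{3},$$ $$\frac{\partial R_\theta(t,x_1)}{\partial a_1}=-R_\theta(t,x_1)e^{a_1x_1}t\,k_2(t)\,x_1,$$ $$\frac{\partial R_\theta(t,x_2)}{\partial\gamma_0}=-R_\theta(t,x_2)e^{a_1x_2}\Big((t+s)+(\tau+s)\frac{k_1(t+s)}{k_1(\tau+s)}\Big(\frac{k_2(\tau+s)}{k_2(\tau)}-1\Big)\Big),$$ $$\frac{\partial R_\theta(t,x_2)}{\partial\gamma_1}=-R_\theta(t,x_2)e^{a_1x_2}\Big(\frac{(t+s)^2}{2}+\frac{\tau+s}{2}\frac{k_1(t+s)}{k_1(\tau+s)}\Big(\tau\frac{k_2(\tau+s)}{k_2(\tau)}-(\tau+s)\Big)\Big),$$ $$\frac{\partial R_\theta(t,x_2)}{\partial\gamma_2}=-R_\theta(t,x_2)e^{a_1x_2}\Big(\frac{(t+s)^3}{3}+\frac{\tau+s}{3}\frac{k_1(t+s)}{k_1(\tau+s)}\Big(\tau^2\frac{k_2(\tau+s)}{k_2(\tau)}-(\tau+s)^2\Big)\Big),$$ $$\frac{\partial R_\theta(t,x_2)}{\partial a_1}=-R_\theta(t,x_2)e^{a_1x_2}\Big[(t+s)k_2(t+s)x_2+\frac{k_1(t+s)}{k_1(\tau+s)}(\tau+s)k_2(\tau+s)(x_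1-x_2)\Big].$$
   Context: Interval-monitored simple step-stress accelerated life test under a proportional hazards model with quadratic baseline hazard $h_0(t)=\gamma_0+\gamma_1t+\gamma_2t^2$ and stress effect $e^{a_1x}$, combined with the cumulative exposure model (the shift $s$ makes the cumulative hazard continuous at $\tau$, with $s<0$ and $\tau+s>0$). $N$ devices are tested; $n_j$ is the number failing in $(t_{j-1},t_j]$ for $j\le L$ and $n_{L+1}$ the number surviving past $t_L$. Stress is $x_1$ on $[0,\tau)$ and $x_2$ afterwards. *)

From Stdlib Require Import Reals Lra ClassicalEpsilon.
Open Scope R_scope.

Record theta := mkTheta { g0 : R; g1 : R; g2 : R; a1 : R }.

Definition inTheta (th : theta) : Prop :=
  0 < g0 th /\ 0 < g1 th /\ 0 < g2 th /\ 0 < a1 th.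

Fixpoint sum1 (n : nat) (f : nat -> R) : R :=
  match n with O => 0 | S m => sum1 m f + f (S m) end.

Definition Hc (th : theta) (t : R) : R :=
  g0 th * t + g1 th * t ^ 2 / 2 + g2 th * t ^ 3 / 3.

Definition k1 (th : theta) (t : R) : R := g2 th * t ^ 2 + g1 th * t + g0 th.
Definition k2 (th : theta) (t : R) : R := g2 th / 3 * t ^ 2 + g1 th / 2 * t + g0 th.

Definition u_root (x1 x2 tau : R) (th : theta) : R :=
  epsilon (inhabits 0)
    (fun u => 0 < u /\
       g2 th / 3 * u ^ 3 + g1 th / 2 * u ^ 2 + g0 th * u
       - exp (a1 th * (x1 - x2)) * (g0 th * tau + g1 th * tau ^ 2 / 2 + g2 th * tau ^ 3 / 3) = 0).

Definition s_shift (x1 x2 tau : R) (th : theta) : R := u_root x1 x2 tau th - tau.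

Definition Rx1 (x1 : R) (th : theta) (t : R) : R :=
  exp (- (exp (a1 th * x1) * Hc th t)).
Definition Rx2 (x1 x2 tau : R) (th : theta) (t : R) : R :=
  exp (- (exp (a1 th * x2) * Hc th (t + s_shift x1 x2 tau th))).

Definition Rth (x1 x2 tau : R) (th : theta) (t : R) : R :=
  if Rle_dec t tau then Rx1 x1 th t else Rx2 x1 x2 tau th t.

Definition pi_ (x1 x2 tau : R) (L : nat) (tt : nat -> R) (th : theta) (j : nat) : R :=
  if (j <=? L)%nat then Rth x1 x2 tau th (tt (j - 1)%nat) - Rth x1 x2 tau th (tt j)
  else Rth x1 x2 tau th (tt L).

Definition Ntot (L : nat) (n : nat -> nat) : nat :=
  (fix f m := match m with O => O | S m' => (f m' + n (S m'))%nat end) (S L).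
Definition phat (L : nat) (n : nat -> nat) (j : nat) : R :=
  INR (n j) / INR (Ntot L n).

(* positive real power (x > 0), and 0 for x <= 0 (used with positive exponents) *)
Definition pw (x y : R) : R := if Rlt_dec 0 x then Rpower x y else 0.

Definition dbeta (beta : R) (L : nat) (p pi : nat -> R) : R :=
  if Req_EM_T beta 0 then
    sum1 (S L) (fun j => if Req_EM_T (p j) 0 then 0 else p j * ln (p j / pi j))
  else
    sum1 (S L) (fun j => pw (pi j) (beta + 1) - (1 + / beta) * pw (pi j) beta * p j
                         + / beta * pw (p j) (beta + 1)).

Definition dRx1 (x1 : R) (th : theta) (t : R) (i : nat) : R :=
  let c := - (Rx1 x1 th t * exp (a1 th * x1)) in
  match i with
  | 0%nat => c * t
  | 1%nat => c * (t ^ 2 / 2)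
  | 2%nat => c * (t ^ 3 / 3)
  | _ => c * (t * k2 th t * x1)
  end.

Definition dRx2 (x1 x2 tau : R) (th : theta) (t : R) (i : nat) : R :=
  let s := s_shift x1 x2 tau th in
  let c := - (Rx2 x1 x2 tau th t * exp (a1 th * x2)) in
  let q := k1 th (t + s) / k1 th (tau + s) in
  let r := k2 th (tau + s) / k2 th tau in
  match i with
  | 0%nat => c * ((t + s) + (tau + s) * q * (r - 1))
  | 1%nat => c * ((t + s) ^ 2 / 2 + (tau + s) / 2 * q * (tau * r - (tau + s)))
  | 2%nat => c * ((t + s) ^ 3 / 3 + (tau + s) / 3 * q * (tau ^ 2 * r - (tau + s) ^ 2))
  | _ => c * ((t + s) * k2 th (t + s) * x2
              + q * (tau + s) * k2 th (tau + s) * (x1 - x2))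
  end.

Definition wrow (x1 x2 tau : R) (L : nat) (tt : nat -> R) (th : theta) (j i : nat) : R :=
  if (j <=? L)%nat then
    if Rlt_dec (tt (j - 1)%nat) tau
    then dRx1 x1 th (tt (j - 1)%nat) i - dRx1 x1 th (tt j) i
    else dRx2 x1 x2 tau th (tt (j - 1)%nat) i - dRx2 x1 x2 tau th (tt j) i
  else dRx2 x1 x2 tau th (tt L) i.

Definition Ubeta (x1 x2 tau beta : R) (L : nat) (tt : nat -> R) (p : nat -> R)
  (th : theta) (i : nat) : R :=
  sum1 (S L) (fun j => wrow x1 x2 tau L tt th j i
                       * Rpower (pi_ x1 x2 tau L tt th j) (beta - 1)
                       * (p j - pi_ x1 x2 tau L tt th j)).

From Stdlib Require Import Reals Lra Lia ClassicalEpsilon.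
From Coquelicot Require Import Coquelicot.
Open Scope R_scope.

(* The estimator minimises theta |-> d_beta(phat, pi(theta)) over the open orthant Theta,
   so its directional derivatives vanish there.  Directions are taken in log-coordinates,
   theta_h = (g0 e^(h d0), g1 e^(h d1), g2 e^(h d2), a1 e^(h d3)), a curve that never leaves
   Theta; by the chain rule its derivative at h = 0 pairs theta_i d_i with the i-th partial
   derivative, and for the divergence this pairing is -(beta + 1) sum_i theta_i d_i U_i
   (for beta = 0 one uses sum_j pi_j = 1).  Unit directions d then give U_beta = 0.

   The only implicit quantity is u = tau + s, the root of H(u) = e^(a1 (x1 - x2)) H(tau)
   with H the cumulative baseline hazard.  Along the curve (u_h - u_0) A_h = G_h, where
   G_h = e^(a1 (x1 - x2)) H(tau) - H(u_0) is explicit and A_h >= g0 > 0 is a divided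
   difference of H; this yields continuity, then differentiability of u with
   u' = G'/k1(u), and substituting u' gives the paper's partial derivatives of R(t, x2). *)

Definition Hc_slope (th : theta) (a b : R) : R :=
  g0 th + g1 th * (a + b) / 2 + g2 th * (a ^ 2 + a * b + b ^ 2) / 3.

Lemma Hc_sub th a b : Hc th b - Hc th a = (b - a) * Hc_slope th a b.
Proof. unfold Hc, Hc_slope; field. Qed.

Lemma Hc_slope_diag th u : Hc_slope th u u = k1 th u.
Proof. unfold Hc_slope, k1; field. Qed.

Lemma Hc_k2 th t : Hc th t = t * k2 th t.
Proof. unfold Hc, k2; field. Qed.

Lemma Hc_0 th : Hc th 0 = 0.
Proof. unfold Hc; field. Qed.

Lemma Hc_slope_ge th a b : inTheta th -> 0 <= a -> 0 <= b -> g0 th <= Hc_slope th a b.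
Proof.
  intros (_ & P1 & P2 & _) Ha Hb; unfold Hc_slope.
  assert (0 <= g1 th * (a + b)) by (apply Rmult_le_pos; lra).
  assert (0 <= g2 th * (a ^ 2 + a * b + b ^ 2)) by (apply Rmult_le_pos; nra).
  lra.
Qed.

Lemma Hc_lt th a b : inTheta th -> 0 <= a -> a < b -> Hc th a < Hc th b.
Proof.
  intros Hth Ha Hab.
  pose proof (Hc_slope_ge th a b Hth Ha ltac:(lra)) as Hs.
  destruct Hth as [P0 _].
  assert (0 < (b - a) * Hc_slope th a b) by (apply Rmult_lt_0_compat; lra).
  pose proof (Hc_sub th a b); lra.
Qed.

Lemma Hc_pos th t : inTheta th -> 0 < t -> 0 < Hc th t.
Proof. intros Hth Ht; rewrite <- (Hc_0 th); apply Hc_lt; auto; lra. Qed.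

Lemma k1_pos th u : inTheta th -> 0 <= u -> 0 < k1 th u.
Proof.
  intros Hth Hu; rewrite <- Hc_slope_diag.
  pose proof (Hc_slope_ge th u u Hth Hu Hu); destruct Hth; lra.
Qed.

Lemma k2_pos th t : inTheta th -> 0 < t -> 0 < k2 th t.
Proof.
  intros Hth Ht; pose proof (Hc_pos th t Hth Ht) as H; rewrite Hc_k2 in H; nra.
Qed.

Lemma Hc_onto th K : inTheta th -> 0 < K -> exists u, 0 < u /\ Hc th u = K.
Proof.
  intros Hth HK.
  set (y := 1 + K / g0 th).
  assert (Hg0 : 0 < g0 th) by apply Hth.
  assert (Hy : 0 < y) by (unfold y; assert (0 < K / g0 th) by (apply Rdiv_lt_0_compat; lra); lra).
  assert (Hly : K < Hc th y).
  { pose proof (Hc_slope_ge th 0 y Hth ltac:(lra) ltac:(lra)).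
    pose proof (Hc_sub th 0 y) as Hs; rewrite Hc_0 in Hs.
    assert (g0 th * y = g0 th + K) by (unfold y; field; lra).
    nra. }
  destruct (IVT (fun u => Hc th u - K) 0 y) as (u & Hu & Hu0);
    [unfold Hc; reg | lra | rewrite Hc_0; lra | lra |].
  exists u; split; [|lra].
  destruct (Req_dec u 0) as [->|]; [|lra].
  rewrite Hc_0 in Hu0; lra.
Qed.

Lemma continuity_pt_squeeze (f w : R -> R) x :
  (forall y, Rabs (f y - f x) <= w y) -> continuity_pt w x -> w x = 0 ->
  continuity_pt f x.
Proof.
  intros Hfw Hw Hwx eps Heps.
  destruct (Hw eps Heps) as (del & Hdel & Hclose).
  exists del; split; [exact Hdel|]; intros y Hy.
  specialize (Hclose y Hy); simpl in *; unfold R_dist in *; rewrite Hwx, Rminus_0_r in Hclose.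
  apply Rle_lt_trans with (w y); [apply Hfw|].
  apply Rle_lt_trans with (Rabs (w y)); [apply RRle_abs | exact Hclose].
Qed.

Lemma continuity_pt_diff_quotient (f : R -> R) x l : derivable_pt_lim f x l ->
  continuity_pt (fun y => if Req_EM_T y x then l else (f y - f x) / (y - x)) x.
Proof.
  intros Hd eps Heps.
  destruct (Hd eps Heps) as [del Hdel].
  exists del; split; [apply cond_pos|]; intros y [[_ Hyx] Hy]; simpl in *; unfold R_dist in *.
  destruct (Req_EM_T y x) as [->|_]; [congruence|].
  destruct (Req_EM_T x x) as [_|]; [|congruence].
  assert (Hh : y - x <> 0) by (intro; apply Hyx; lra).
  specialize (Hdel (y - x) Hh Hy).
  now replace (x + (y - x)) with y in Hdel by ring.
Qed.

Lemma derivable_pt_lim_slope (f P : R -> R) x :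
  (forall y, f y = f x + (y - x) * P y) -> continuity_pt P x ->
  derivable_pt_lim f x (P x).
Proof.
  intros Hf HP eps Heps.
  destruct (HP eps Heps) as (del & Hdel & Hclose).
  exists (mkposreal del Hdel); intros h Hh0 Hh; simpl in *.
  rewrite (Hf (x + h)).
  replace ((f x + (x + h - x) * P (x + h) - f x) / h) with (P (x + h)) by (field; auto).
  apply Hclose; split; [split; [exact I | lra] |].
  unfold R_dist; now replace (x + h - x) with h by ring.
Qed.

Section ImplicitDerivative.

Variables (u A G : R -> R) (x dG : R).
Hypothesis u_factor : forall y, (u y - u x) * A y = G y.
Hypothesis G_derive : is_derive G x dG.

Let G_x : G x = 0.
Proof. rewrite <- u_factor; ring. Qed.

Lemma continuity_pt_of_factor (m : R -> R) :
  (forall y, 0 < m y <= A y) -> continuity_pt m x -> continuity_pt u x.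
Proof.
  intros Hm Hmc.
  apply (continuity_pt_squeeze u (fun y => Rabs (G y) / m y)).
  - intros y; destruct (Hm y) as [Hm0 HmA].
    apply Rmult_le_reg_r with (m y); [exact Hm0|].
    unfold Rdiv; rewrite Rmult_assoc, Rinv_l, Rmult_1_r by lra.
    rewrite <- u_factor, Rabs_mult, (Rabs_right (A y)) by lra.
    apply Rmult_le_compat_l; [apply Rabs_pos | exact HmA].
  - apply continuity_pt_div; [| exact Hmc | specialize (Hm x); lra].
    apply (continuity_pt_comp G Rabs); [| apply Rcontinuity_abs].
    apply derivable_continuous_pt; exists dG; now apply is_derive_Reals.
  - now rewrite G_x, Rabs_R0, Rdiv_0_l.
Qed.

Lemma is_derive_of_factor :
  (forall y, 0 < A y) -> continuity_pt A x -> is_derive u x (dG / A x).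
Proof.
  intros HA HAc.
  set (Q := fun y => if Req_EM_T y x then dG else (G y - G x) / (y - x)).
  assert (HQ : continuity_pt Q x)
    by (apply continuity_pt_diff_quotient; now apply is_derive_Reals).
  assert (HP : continuity_pt (fun y => Q y / A y) x)
    by (apply continuity_pt_div; auto; specialize (HA x); lra).
  replace (dG / A x) with (Q x / A x)
    by (unfold Q; destruct (Req_EM_T x x); congruence).
  apply is_derive_Reals, (derivable_pt_lim_slope u (fun y => Q y / A y)); [|exact HP].
  intros y; unfold Q; destruct (Req_EM_T y x) as [->|Hyx]; [ring|].
  specialize (HA y); rewrite G_x, <- (u_factor y).
  field; split; [lra | intro; apply Hyx; lra].
Qed.

End ImplicitDerivative.

Lemma is_derive_global_min (F : R -> R) x l :
  is_derive F x l -> (forall y, F x <= F y) -> l = 0.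
Proof.
  intros HF Hmin; apply is_derive_Reals in HF.
  pose (pr := exist (fun l => derivable_pt_lim F x l) l HF : derivable_pt F x).
  rewrite <- (derive_pt_eq_0 F x l pr HF).
  apply (deriv_minimum F (x - 1) (x + 1) x pr); [lra | lra |].
  intros y _ _; apply Hmin.
Qed.

Lemma sum1_ext n (f g : nat -> R) :
  (forall j, (1 <= j <= n)%nat -> f j = g j) -> sum1 n f = sum1 n g.
Proof.
  induction n as [|n IH]; intros Hfg; simpl; [reflexivity|].
  f_equal; [apply IH; intros j Hj|]; apply Hfg; lia.
Qed.

Lemma sum1_minus n (f g : nat -> R) : sum1 n (fun j => f j - g j) = sum1 n f - sum1 n g.
Proof. induction n as [|n IH]; simpl; [ring | rewrite IH; ring]. Qed.

Lemma sum1_scal n c (f : nat -> R) : sum1 n (fun j => c * f j) = c * sum1 n f.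
Proof. induction n as [|n IH]; simpl; [ring | rewrite IH; ring]. Qed.

Lemma is_derive_sum1 n (f : R -> nat -> R) (df : nat -> R) x :
  (forall j, (1 <= j <= n)%nat -> is_derive (fun h => f h j) x (df j)) ->
  is_derive (fun h => sum1 n (f h)) x (sum1 n df).
Proof.
  induction n as [|n IH]; intros Hf; simpl.
  - apply is_derive_Reals, derivable_pt_lim_const.
  - apply (is_derive_plus (fun h => sum1 n (f h)) (fun h => f h (S n)));
      [apply IH; intros j Hj |]; apply Hf; lia.
Qed.

Lemma is_derive_dpd_term (P : R -> R) dP x beta p :
  0 < beta -> (forall h, 0 < P h) -> is_derive P x dP ->
  is_derive (fun h => pw (P h) (beta + 1) - (1 + / beta) * pw (P h) beta * p
                      + / beta * pw p (beta + 1)) x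
    (- (beta + 1) * (dP * Rpower (P x) (beta - 1) * (p - P x))).
Proof.
  intros Hb HP HdP.
  apply (is_derive_ext (fun h => exp ((beta + 1) * ln (P h))
                                 - (1 + / beta) * exp (beta * ln (P h)) * p
                                 + / beta * pw p (beta + 1))).
  { intros h; unfold pw, Rpower.
    destruct (Rlt_dec 0 (P h)); [reflexivity | specialize (HP h); lra]. }
  assert (Hex : ex_derive P x) by (now exists dP).
  auto_derive; [repeat split; auto |].
  replace (Derive (fun y => P y) x) with dP by (symmetry; now apply is_derive_unique).
  replace ((beta + 1) * ln (P x)) with ((beta - 1) * ln (P x) + ln (P x) + ln (P x)) by ring.
  replace (beta * ln (P x)) with ((beta - 1) * ln (P x) + ln (P x)) by ring.
  rewrite !exp_plus, exp_ln by apply HP; unfold Rpower.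
  specialize (HP x); field; lra.
Qed.

(* Stated in the shape of [is_derive_dpd_term] at [beta = 0]; the extra [- dP] terms sum
   to zero because the cell probabilities sum to one. *)
Lemma is_derive_kl_term (P : R -> R) dP x p :
  0 <= p -> (forall h, 0 < P h) -> is_derive P x dP ->
  is_derive (fun h => if Req_EM_T p 0 then 0 else p * ln (p / P h)) x
    (- (0 + 1) * (dP * Rpower (P x) (0 - 1) * (p - P x)) - dP).
Proof.
  intros Hp HP HdP.
  assert (HPx := HP x).
  replace (Rpower (P x) (0 - 1)) with (/ P x)
    by (replace (0 - 1) with (Ropp 1) by ring; now rewrite Rpower_Ropp, Rpower_1).
  destruct (Req_EM_T p 0) as [->|Hp0].
  - replace (- (0 + 1) * (dP * / P x * (0 - P x)) - dP) with 0 by (field; lra).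
    apply is_derive_Reals, derivable_pt_lim_const.
  - assert (Hex : ex_derive P x) by (now exists dP).
    assert (0 < p / P x) by (apply Rdiv_lt_0_compat; lra).
    auto_derive; [repeat split; auto; lra |].
    replace (Derive (fun y => P y) x) with dP by (symmetry; now apply is_derive_unique).
    field; lra.
Qed.

Lemma is_derive_dbeta beta L (p : nat -> R) (P : R -> nat -> R) (dP : nat -> R) x :
  0 <= beta -> (forall j, 0 <= p j) ->
  (forall h j, (1 <= j <= S L)%nat -> 0 < P h j) ->
  (forall h, sum1 (S L) (P h) = 1) ->
  (forall j, (1 <= j <= S L)%nat -> is_derive (fun h => P h j) x (dP j)) ->
  is_derive (fun h => dbeta beta L p (P h)) x
    (- (beta + 1) * sum1 (S L) (fun j => dP j * Rpower (P x j) (beta - 1) * (p j - P x j))).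
Proof.
  intros Hb Hp HP Hsum HdP.
  unfold dbeta; destruct (Req_EM_T beta 0) as [->|Hb0].
  - assert (Hmass : sum1 (S L) dP = 0).
    { assert (Hconst : is_derive (fun h => sum1 (S L) (P h)) x 0).
      { apply (is_derive_ext (fun _ => 1)); [intros h; now rewrite Hsum|].
        apply is_derive_Reals, derivable_pt_lim_const. }
      apply is_derive_unique in Hconst.
      now rewrite <- Hconst; symmetry; apply is_derive_unique, is_derive_sum1. }
    replace (- (0 + 1) * _) with
      (sum1 (S L) (fun j => - (0 + 1) * (dP j * Rpower (P x j) (0 - 1) * (p j - P x j)) - dP j))
      by (rewrite sum1_minus, sum1_scal, Hmass; ring).
    apply (is_derive_sum1 (S L)
             (fun h j => if Req_EM_T (p j) 0 then 0 else p j * ln (p j / P h j)));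
      intros j Hj.
    apply is_derive_kl_term; auto.
  - rewrite <- sum1_scal.
    apply (is_derive_sum1 (S L)
             (fun h j => pw (P h j) (beta + 1) - (1 + / beta) * pw (P h j) beta * p j
                         + / beta * pw (p j) (beta + 1)));
      intros j Hj.
    apply is_derive_dpd_term; auto; lra.
Qed.

Definition log_shift (th d : theta) (h : R) : theta :=
  mkTheta (g0 th * exp (h * g0 d)) (g1 th * exp (h * g1 d))
          (g2 th * exp (h * g2 d)) (a1 th * exp (h * a1 d)).

Definition log_dir (th d : theta) (f : nat -> R) : R :=
  g0 th * g0 d * f 0%nat + g1 th * g1 d * f 1%nat
  + g2 th * g2 d * f 2%nat + a1 th * a1 d * f 3%nat.

Definition Hc_dir (th d : theta) (t : R) : R :=
  g0 th * g0 d * t + g1 th * g1 d * t ^ 2 / 2 + g2 th * g2 d * t ^ 3 / 3.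

Lemma log_shift_0 th d : log_shift th d 0 = th.
Proof. destruct th; unfold log_shift; simpl; now rewrite !Rmult_0_l, exp_0, !Rmult_1_r. Qed.

Lemma inTheta_log_shift th d h : inTheta th -> inTheta (log_shift th d h).
Proof.
  intros (P0 & P1 & P2 & P3); unfold inTheta, log_shift; simpl.
  repeat split; apply Rmult_lt_0_compat; auto; apply exp_pos.
Qed.

Lemma log_dir_minus th d f g :
  log_dir th d (fun i => f i - g i) = log_dir th d f - log_dir th d g.
Proof. unfold log_dir; ring. Qed.

Lemma log_dir_sum1 th d n (f : nat -> nat -> R) :
  log_dir th d (fun i => sum1 n (fun j => f j i)) = sum1 n (fun j => log_dir th d (f j)).
Proof.
  induction n as [|n IH]; simpl; [unfold log_dir; ring|].
  rewrite <- IH; unfold log_dir; ring.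
Qed.

Lemma is_derive_a1_shift th d : is_derive (fun h => a1 (log_shift th d h)) 0 (a1 th * a1 d).
Proof.
  unfold log_shift; simpl; auto_derive; [exact I|].
  rewrite Rmult_0_l, exp_0; ring.
Qed.

Lemma is_derive_Hc_shift th d t : is_derive (fun h => Hc (log_shift th d h) t) 0 (Hc_dir th d t).
Proof.
  unfold Hc, Hc_dir, log_shift; simpl; auto_derive; [repeat split|].
  rewrite !Rmult_0_l, exp_0; field.
Qed.

Lemma is_derive_ph_survival (a K : R -> R) x c da dK :
  is_derive a x da -> is_derive K x dK ->
  is_derive (fun h => exp (- (exp (a h * c) * K h))) x
    (- exp (- (exp (a x * c) * K x)) * exp (a x * c) * (da * c * K x + dK)).
Proof.
  intros Ha HK.
  assert (Hexa : ex_derive a x) by (now exists da).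
  assert (HexK : ex_derive K x) by (now exists dK).
  auto_derive; [repeat split; auto|].
  replace (Derive (fun y => a y) x) with da by (symmetry; now apply is_derive_unique).
  replace (Derive (fun y => K y) x) with dK by (symmetry; now apply is_derive_unique).
  ring.
Qed.

Lemma increasing_grid_lt (tt : nat -> R) L : (forall j, (j < L)%nat -> tt j < tt (S j)) ->
  forall i j, (i < j <= L)%nat -> tt i < tt j.
Proof.
  intros Hincr i j; induction j as [|j IH]; intros Hij; [lia|].
  destruct (Nat.eq_dec i j) as [->|]; [apply Hincr; lia|].
  apply Rlt_trans with (tt j); [apply IH | apply Hincr]; lia.
Qed.

Lemma increasing_grid_le (tt : nat -> R) L : (forall j, (j < L)%nat -> tt j < tt (S j)) ->
  forall i j, (i <= j <= L)%nat -> tt i <= tt j.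
Proof.
  intros Hincr i j Hij; destruct (Nat.eq_dec i j) as [->|]; [lra|].
  left; apply (increasing_grid_lt tt L); auto; lia.
Qed.

Lemma continuity_pt_Hc_slope_shift th d a (v : R -> R) : continuity_pt v 0 ->
  continuity_pt (fun h => Hc_slope (log_shift th d h) a (v h)) 0.
Proof.
  intros Hv; unfold Hc_slope, log_shift; simpl.
  repeat first [ assumption | apply continuity_pt_plus | apply continuity_pt_mult
               | apply continuity_pt_const; intros ? ?; reflexivity ]; reg.
Qed.

Lemma log_dir_basis th f : inTheta th -> (forall d, log_dir th d f = 0) ->
  forall i, (i < 4)%nat -> f i = 0.
Proof.
  intros (P0 & P1 & P2 & P3) Hf i Hi.
  destruct i as [|[|[|[|i]]]]; [| | | | lia].
  - specialize (Hf (mkTheta 1 0 0 0)); unfold log_dir in Hf; simpl in Hf.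
    apply (Rmult_eq_reg_l (g0 th)); lra.
  - specialize (Hf (mkTheta 0 1 0 0)); unfold log_dir in Hf; simpl in Hf.
    apply (Rmult_eq_reg_l (g1 th)); lra.
  - specialize (Hf (mkTheta 0 0 1 0)); unfold log_dir in Hf; simpl in Hf.
    apply (Rmult_eq_reg_l (g2 th)); lra.
  - specialize (Hf (mkTheta 0 0 0 1)); unfold log_dir in Hf; simpl in Hf.
    apply (Rmult_eq_reg_l (a1 th)); lra.
Qed.

Section ShiftedModel.

Variables (x1 x2 tau : R).
Hypothesis tau_pos : 0 < tau.

Lemma u_root_spec th : inTheta th ->
  0 < u_root x1 x2 tau th /\
  Hc th (u_root x1 x2 tau th) = exp (a1 th * (x1 - x2)) * Hc th tau.
Proof.
  intros Hth.
  assert (HK : 0 < exp (a1 th * (x1 - x2)) * Hc th tau)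
    by (apply Rmult_lt_0_compat; [apply exp_pos | apply Hc_pos; auto]).
  destruct (Hc_onto th _ Hth HK) as (u & Hu & Hue).
  assert (Hex : exists u, 0 < u /\
      g2 th / 3 * u ^ 3 + g1 th / 2 * u ^ 2 + g0 th * u
      - exp (a1 th * (x1 - x2)) * (g0 th * tau + g1 th * tau ^ 2 / 2 + g2 th * tau ^ 3 / 3) = 0)
    by (exists u; split; [exact Hu | unfold Hc in Hue; lra]).
  destruct (epsilon_spec (inhabits 0) _ Hex) as [Hpos Hroot].
  fold (u_root x1 x2 tau th) in Hpos, Hroot.
  split; [exact Hpos | unfold Hc; lra].
Qed.

Lemma u_root_balance th : inTheta th ->
  exp (a1 th * x2) * Hc th (u_root x1 x2 tau th) = exp (a1 th * x1) * Hc th tau.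
Proof.
  intros Hth; rewrite (proj2 (u_root_spec th Hth)), <- Rmult_assoc, <- exp_plus.
  now replace (a1 th * x2 + a1 th * (x1 - x2)) with (a1 th * x1) by ring.
Qed.

Lemma Rx1_Rx2_tau th : inTheta th -> Rx1 x1 th tau = Rx2 x1 x2 tau th tau.
Proof.
  intros Hth; unfold Rx1, Rx2, s_shift.
  replace (tau + (u_root x1 x2 tau th - tau)) with (u_root x1 x2 tau th) by ring.
  now rewrite u_root_balance.
Qed.

Lemma Rth_decreasing th a b : inTheta th -> 0 <= a -> a < b ->
  Rth x1 x2 tau th b < Rth x1 x2 tau th a.
Proof.
  intros Hth Ha Hab.
  pose proof (proj1 (u_root_spec th Hth)) as Hu.
  pose proof (u_root_balance th Hth) as Hbal.
  set (u := u_root x1 x2 tau th) in *.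
  pose proof (exp_pos (a1 th * x1)); pose proof (exp_pos (a1 th * x2)).
  unfold Rth, Rx1, Rx2, s_shift; fold u.
  destruct (Rle_dec b tau); destruct (Rle_dec a tau); try lra;
    apply exp_increasing, Ropp_lt_contravar.
  - apply Rmult_lt_compat_l; auto; apply Hc_lt; auto.
  - apply Rle_lt_trans with (exp (a1 th * x1) * Hc th tau).
    + apply Rmult_le_compat_l; [lra|].
      destruct (Req_dec a tau) as [->|]; [lra | left; apply Hc_lt; auto; lra].
    + rewrite <- Hbal; apply Rmult_lt_compat_l; auto; apply Hc_lt; auto; lra.
  - apply Rmult_lt_compat_l; auto; apply Hc_lt; auto; lra.
Qed.

Lemma is_derive_u_root th d : inTheta th ->
  is_derive (fun h => u_root x1 x2 tau (log_shift th d h)) 0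
    ((exp (a1 th * (x1 - x2)) * (a1 th * a1 d * (x1 - x2) * Hc th tau + Hc_dir th d tau)
      - Hc_dir th d (u_root x1 x2 tau th)) / k1 th (u_root x1 x2 tau th)).
Proof.
  intros Hth.
  set (u0 := u_root x1 x2 tau th).
  set (thh := log_shift th d).
  set (u := fun h => u_root x1 x2 tau (thh h)).
  set (G := fun h => exp (a1 (thh h) * (x1 - x2)) * Hc (thh h) tau - Hc (thh h) u0).
  assert (Hu0 : u 0 = u0) by (unfold u, thh; now rewrite log_shift_0).
  assert (Hthh : forall h, inTheta (thh h)) by (intros h; now apply inTheta_log_shift).
  assert (Hupos : forall h, 0 < u h) by (intros h; now apply u_root_spec).
  assert (Hfactor : forall h, (u h - u 0) * Hc_slope (thh h) u0 (u h) = G h).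
  { intros h; rewrite Hu0, <- Hc_sub; unfold G, u.
    now rewrite (proj2 (u_root_spec (thh h) (Hthh h))). }
  assert (HG : is_derive G 0
    (exp (a1 th * (x1 - x2)) * (a1 th * a1 d * (x1 - x2) * Hc th tau + Hc_dir th d tau)
     - Hc_dir th d u0)).
  { unfold G, thh, log_shift, Hc, Hc_dir; simpl; auto_derive; [repeat split|].
    rewrite !Rmult_0_l, !exp_0, !Rmult_1_r; field. }
  assert (Hslope : forall h, 0 < g0 (thh h) <= Hc_slope (thh h) u0 (u h)).
  { intros h; split; [apply Hthh|].
    apply Hc_slope_ge; [apply Hthh | rewrite <- Hu0; left; apply Hupos | left; apply Hupos]. }
  assert (Huc : continuity_pt u 0).
  { apply (continuity_pt_of_factor u _ G 0 _ Hfactor HG (fun h => g0 (thh h))); [exact Hslope|].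
    unfold thh, log_shift; simpl; reg. }
  replace (k1 th u0) with (Hc_slope (thh 0) u0 (u 0))
    by (unfold thh; now rewrite log_shift_0, Hu0, Hc_slope_diag).
  apply (is_derive_of_factor u _ G 0 _ Hfactor HG).
  - intros h; specialize (Hslope h); lra.
  - now apply continuity_pt_Hc_slope_shift.
Qed.

Lemma is_derive_Rx1 th d t :
  is_derive (fun h => Rx1 x1 (log_shift th d h) t) 0 (log_dir th d (dRx1 x1 th t)).
Proof.
  pose proof (is_derive_ph_survival _ _ 0 x1 _ _ (is_derive_a1_shift th d)
                (is_derive_Hc_shift th d t)) as H; cbv beta in H; rewrite log_shift_0 in H.
  replace (log_dir th d (dRx1 x1 th t)) with
    (- exp (- (exp (a1 th * x1) * Hc th t)) * exp (a1 th * x1)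
     * (a1 th * a1 d * x1 * Hc th t + Hc_dir th d t)); [exact H|].
  unfold log_dir, dRx1, Hc_dir; fold (Rx1 x1 th t); rewrite Hc_k2; field.
Qed.

Lemma is_derive_Hc_shifted th d t uD :
  is_derive (fun h => u_root x1 x2 tau (log_shift th d h)) 0 uD ->
  is_derive (fun h => Hc (log_shift th d h) (t + s_shift x1 x2 tau (log_shift th d h))) 0
    (Hc_dir th d (t + s_shift x1 x2 tau th) + k1 th (t + s_shift x1 x2 tau th) * uD).
Proof.
  intros Hu.
  set (u := fun h => u_root x1 x2 tau (log_shift th d h)) in Hu.
  assert (Hex : ex_derive u 0) by (now exists uD).
  apply (is_derive_ext (fun h => g0 th * exp (h * g0 d) * (t + (u h - tau))
                                 + g1 th * exp (h * g1 d) * (t + (u h - tau)) ^ 2 / 2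
                                 + g2 th * exp (h * g2 d) * (t + (u h - tau)) ^ 3 / 3));
    [reflexivity|].
  auto_derive; [repeat split; auto|].
  replace (Derive (fun y => u y) 0) with uD by (symmetry; now apply is_derive_unique).
  unfold u, s_shift, Hc_dir, k1; rewrite log_shift_0, !Rmult_0_l, !exp_0; field.
Qed.

Lemma is_derive_Rx2 th d t : inTheta th ->
  is_derive (fun h => Rx2 x1 x2 tau (log_shift th d h) t) 0 (log_dir th d (dRx2 x1 x2 tau th t)).
Proof.
  intros Hth.
  pose proof (is_derive_ph_survival _ _ 0 x2 _ _ (is_derive_a1_shift th d)
                (is_derive_Hc_shifted th d t _ (is_derive_u_root th d Hth))) as H.
  cbv beta in H; rewrite log_shift_0 in H.
  match type of H with is_derive _ _ ?v =>
    replace (log_dir th d (dRx2 x1 x2 tau th t)) with v; [exact H|] end.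
  destruct (u_root_spec th Hth) as [Hu Hue].
  unfold log_dir, dRx2; fold (Rx2 x1 x2 tau th t); unfold s_shift.
  set (u0 := u_root x1 x2 tau th) in *.
  replace (tau + (u0 - tau)) with u0 by ring.
  assert (HcT : 0 < Hc th tau) by (apply Hc_pos; auto).
  assert (K1 : 0 < k1 th u0) by (apply k1_pos; auto; lra).
  assert (K2 : 0 < k2 th tau) by (apply k2_pos; auto).
  replace (exp (a1 th * (x1 - x2))) with (Hc th u0 / Hc th tau) by (rewrite Hue; field; lra).
  unfold Hc_dir, Hc, k1, k2 in *.
  field; repeat split; lra.
Qed.

Lemma is_derive_Rth_before th d t : t <= tau ->
  is_derive (fun h => Rth x1 x2 tau (log_shift th d h) t) 0 (log_dir th d (dRx1 x1 th t)).
Proof.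
  intros Ht; apply (is_derive_ext (fun h => Rx1 x1 (log_shift th d h) t)).
  - intros h; unfold Rth; destruct (Rle_dec t tau); [reflexivity | lra].
  - apply is_derive_Rx1.
Qed.

Lemma is_derive_Rth_after th d t : inTheta th -> tau <= t ->
  is_derive (fun h => Rth x1 x2 tau (log_shift th d h) t) 0 (log_dir th d (dRx2 x1 x2 tau th t)).
Proof.
  intros Hth Ht; apply (is_derive_ext (fun h => Rx2 x1 x2 tau (log_shift th d h) t)).
  - intros h; unfold Rth; destruct (Rle_dec t tau); [|reflexivity].
    replace t with tau by lra.
    symmetry; apply Rx1_Rx2_tau; auto; now apply inTheta_log_shift.
  - now apply is_derive_Rx2.
Qed.

Section Grid.

Variables (L k : nat) (tt : nat -> R).
Hypothesis tt_0 : tt 0%nat = 0.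
Hypothesis tt_incr : forall j, (j < L)%nat -> tt j < tt (S j).
Hypothesis k_lt_L : (k < L)%nat.
Hypothesis tt_k : tt k = tau.

Lemma pi_pos th j : inTheta th -> (1 <= j <= S L)%nat -> 0 < pi_ x1 x2 tau L tt th j.
Proof.
  intros Hth Hj; unfold pi_; destruct (Nat.leb_spec j L).
  - assert (Hpos : 0 <= tt (j - 1)%nat)
      by (rewrite <- tt_0; apply (increasing_grid_le tt L); auto; lia).
    assert (Hstep : tt (j - 1)%nat < tt j) by (apply (increasing_grid_lt tt L); auto; lia).
    pose proof (Rth_decreasing th _ _ Hth Hpos Hstep); lra.
  - unfold Rth, Rx1, Rx2; destruct Rle_dec; apply exp_pos.
Qed.

Lemma sum1_pi_telescope th m : (m <= L)%nat ->
  sum1 m (pi_ x1 x2 tau L tt th) = Rth x1 x2 tau th (tt 0%nat) - Rth x1 x2 tau th (tt m).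
Proof.
  induction m as [|m IH]; intros Hm; simpl sum1; [ring|].
  rewrite IH by lia; unfold pi_; destruct (Nat.leb_spec (S m) L); [|lia].
  replace (S m - 1)%nat with m by lia; ring.
Qed.

Lemma sum1_pi th : sum1 (S L) (pi_ x1 x2 tau L tt th) = 1.
Proof.
  simpl sum1; rewrite sum1_pi_telescope by lia.
  unfold pi_ at 1; destruct (Nat.leb_spec (S L) L); [lia|].
  rewrite tt_0; unfold Rth at 1; destruct (Rle_dec 0 tau); [|lra].
  unfold Rx1; rewrite Hc_0, Rmult_0_r, Ropp_0, exp_0; ring.
Qed.

Lemma is_derive_pi th d j : inTheta th -> (1 <= j <= S L)%nat ->
  is_derive (fun h => pi_ x1 x2 tau L tt (log_shift th d h) j) 0
    (log_dir th d (wrow x1 x2 tau L tt th j)).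
Proof.
  intros Hth Hj; unfold pi_, wrow; destruct (Nat.leb_spec j L) as [HjL|HjL].
  - assert (Hstep : tt (j - 1)%nat <= tt j) by (apply (increasing_grid_le tt L); auto; lia).
    destruct (Rlt_dec (tt (j - 1)%nat) tau) as [Hlt|Hge].
    + assert (tt j <= tau).
      { rewrite <- tt_k; apply (increasing_grid_le tt L); auto.
        destruct (Nat.le_gt_cases j k); [lia|].
        assert (tt k <= tt (j - 1)%nat) by (apply (increasing_grid_le tt L); auto; lia); lra. }
      rewrite log_dir_minus; apply @is_derive_minus; apply is_derive_Rth_before; lra.
    + rewrite log_dir_minus; apply @is_derive_minus; apply is_derive_Rth_after; auto; lra.
  - assert (tau <= tt L) by (rewrite <- tt_k; apply (increasing_grid_le tt L); auto; lia).
    now apply is_derive_Rth_after.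
Qed.

Lemma is_derive_dbeta_pi beta p th d : 0 <= beta -> (forall j, 0 <= p j) -> inTheta th ->
  is_derive (fun h => dbeta beta L p (pi_ x1 x2 tau L tt (log_shift th d h))) 0
    (- (beta + 1) * log_dir th d (Ubeta x1 x2 tau beta L tt p th)).
Proof.
  intros Hb Hp Hth.
  unfold Ubeta; rewrite log_dir_sum1.
  replace (sum1 (S L) _) with
    (sum1 (S L) (fun j => log_dir th d (wrow x1 x2 tau L tt th j)
                          * Rpower (pi_ x1 x2 tau L tt (log_shift th d 0) j) (beta - 1)
                          * (p j - pi_ x1 x2 tau L tt (log_shift th d 0) j)))
    by (rewrite log_shift_0; apply sum1_ext; intros j _; unfold log_dir; ring).
  apply (is_derive_dbeta beta L p (fun h => pi_ x1 x2 tau L tt (log_shift th d h))); auto.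
  - intros h j Hj; apply pi_pos; auto; now apply inTheta_log_shift.
  - intros h; apply sum1_pi.
  - intros j Hj; now apply is_derive_pi.
Qed.

End Grid.

End ShiftedModel.

Theorem theorem2 (x1 x2 tau beta : R) (L k : nat) (tt : nat -> R) (n : nat -> nat)
  (thhat : theta) :
  x1 < x2 -> 0 < tau ->
  tt 0%nat = 0 -> (forall j, (j < L)%nat -> tt j < tt (S j)) ->
  (1 <= k)%nat -> (k < L)%nat -> tt k = tau ->
  (0 < Ntot L n)%nat ->
  0 <= beta ->
  inTheta thhat ->
  (forall th, inTheta th ->
     dbeta beta L (phat L n) (pi_ x1 x2 tau L tt thhat)
     <= dbeta beta L (phat L n) (pi_ x1 x2 tau L tt th)) ->
  forall i, (i < 4)%nat -> Ubeta x1 x2 tau beta L tt (phat L n) thhat i = 0.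
Proof.
  intros _ Htau Ht0 Hincr _ HkL Htk HN Hb Hth Hmin.
  apply (log_dir_basis thhat); [exact Hth|]; intros d.
  assert (Hp : forall j, 0 <= phat L n j)
    by (intros j; apply Rdiv_le_0_compat; [apply pos_INR | apply lt_0_INR; lia]).
  pose proof (is_derive_dbeta_pi x1 x2 tau Htau L k tt Ht0 Hincr HkL Htk beta _ thhat d Hb Hp Hth)
    as Hgrad.
  apply is_derive_global_min in Hgrad.
  - apply Rmult_integral in Hgrad as [Hb1|]; [lra | assumption].
  - intros h; cbv beta; rewrite log_shift_0; apply Hmin, inTheta_log_shift, Hth.
Qed.
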